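(* Let $\mathsf{k}$ be a field of characteristic zero, $S=\mathsf{k}[x_1,\dots,x_n]$ with $n\ge2$, $R=\mathsf{k}[X_1,\dots,X_n]$ with $S$ acting by differentiation, $F\in R$ nonzero homogeneous of degree $d\ge2$, $A=S/\operatorname{Ann}_S(F)$ and $\ell\in S_1$. Let $\mathbf d=(\dim_{\mathsf{k}}A^{(0)},\dim_{\mathsf{k}}A^{(1)},\dots,\dim_{\mathsf{k}}A^{(d)})$ and $\mathbf n=(n_0,\dots,n_d)=\Delta^2\mathbf d$. Then the Jordan type of $\ell$ on $A$ is $$P_{\ell,A}=\big(\underbrace{d+1,\dots,d+1}_{n_d},\underbrace{d,\dots,d}_{n_{d-1}},\dots,\underbrace{2,\dots,2}_{n_1},\underbrace{1,\dots,1}_{n_0}\big).$$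
   Context: $x_i$ acts as $\partial/\partial X_i$; $\operatorname{Ann}_S(G)=\{g\in S:g\circ G=0\}$. $A^{(i)}:=S/\operatorname{Ann}_S(\ell^i\circ F)$ for $0\le i\le d$ (the zero algebra if $\ell^i\circ F=0$); $\dim_{\mathsf{k}}A^{(i)}$ is its total $\mathsf{k}$-dimension, and $\dim_{\mathsf{k}}A^{(i)}:=0$ for $i>d$. $\Delta^2\mathbf d(i)=\dim_{\mathsf{k}}A^{(i)}+\dim_{\mathsf{k}}A^{(i+2)}-2\dim_{\mathsf{k}}A^{(i+1)}$. The Jordan type $P_{\ell,A}$ is the partition of $\dim_{\mathsf{k}}A$ given by the sizes of the Jordan blocks of the nilpotent multiplication map $\times\ell:A\to A$. *)

From HB Require Import structures.
From mathcomp Require Import all_boot all_order all_algebra.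
From mathcomp Require Import mpoly.
From Stdlib Require Import ClassicalEpsilon.
Set Implicit Arguments. Unset Strict Implicit. Unset Printing Implicit Defensive.
Import Order.TTheory GRing.Theory Num.Theory.
Local Open Scope ring_scope.

Section Defs.
Variables (k : fieldType) (n : nat).
Local Notation S := {mpoly k[n]}.  (* S = k[x_1..x_n], also used for R = k[X_1..X_n] *)

(* contraction g o G : x_i acts as d/dX_i, i.e. x^m acts as the partial
   derivative of multi-index m *)
Definition contract (g G : S) : S :=
  \sum_(m <- msupp g) g@_m *: mderivm m G.

Definition annih (G g : S) : Prop := contract g G = 0.

Definition indep_mod (I : S -> Prop) (m : nat) (v : 'I_m -> S) : Prop :=
  forall c : 'I_m -> k, I (\sum_(j < m) c j *: v j) -> forall j, c j = 0.

Definition qdim_is (I : S -> Prop) (m : nat) : Prop :=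
  (exists v : 'I_m -> S, indep_mod I v) /\
  (forall m' (v : 'I_m' -> S), indep_mod I v -> (m' <= m)%N).

(* total k-dimension of S / I (finite in all uses below) *)
Definition qdim (I : S -> Prop) : nat :=
  epsilon (inhabits 0%N) (fun m => qdim_is I m).

(* dim_k A^(i), A^(i) = S / Ann_S(l^i o F), and 0 for i > d *)
Definition dimA (l F : S) (d i : nat) : nat :=
  if (i <= d)%N then qdim (annih (contract (l ^+ i) F)) else 0%N.

Definition d2dim (l F : S) (d i : nat) : int :=
  (dimA l F d i)%:Z + (dimA l F d i.+2)%:Z - 2 * (dimA l F d i.+1)%:Z.

(* The Jordan type of multiplication by l on A = S / Ann_S(F) is the partition
   P (listed as a sequence of block sizes): there is a Jordan basis of A for
   the nilpotent map x l, made of strings v_j, l v_j, ..., l^(P_j - 1) v_j,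
   with l^(P_j) v_j = 0 in A. *)
Definition jordan_type_is (l F : S) (P : seq nat) : Prop :=
  exists v : 'I_(size P) -> S,
    [/\ (forall j : 'I_(size P), annih F (l ^+ (nth 0%N P j) * v j)),
        (forall g : S, exists c : 'I_(size P) -> nat -> k,
            annih F (g - \sum_(j < size P) \sum_(t < nth 0%N P j)
                            c j t *: (l ^+ t * v j))) &
        (forall c : 'I_(size P) -> nat -> k,
            annih F (\sum_(j < size P) \sum_(t < nth 0%N P j)
                        c j t *: (l ^+ t * v j)) ->
            forall (j : 'I_(size P)) (t : nat), (t < nth 0%N P j)%N -> c j t = 0)].

End Defs.

(* Multiplication by [l] is a nilpotent operator on [A = S / Ann(F)]: as [F] is
   homogeneous of degree [d] and [l] is linear, [l^(d+1) o F = 0] for degree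
   reasons, and [A] is finite dimensional because monomials of degree at least
   [msize F] annihilate [F].  Hence [A] has a Jordan basis for [l] whose strings
   have length at most [d + 1].  It is built by induction on the nilpotency
   order: take a Jordan basis modulo [l^-1 Ann(F)], lengthen each string by one,
   and complete the new tops [l^(P_j) u_j] to a basis of [l^-1 Ann(F) / Ann(F)]
   by strings of length one.
   Since [g o (l^i o F) = (l^i g) o F], [A^(i)] is [S] modulo [l^-i Ann(F)],
   for which the same strings, each shortened by [i], form a Jordan basis; thus
   [dim A^(i) = sum_j (P_j - i)] (truncated subtraction), and the second
   difference of this piecewise linear function of [i] counts the strings of
   length exactly [i + 1]. *)

From HB Require Import structures.
From mathcomp Require Import all_boot all_order all_algebra.
From mathcomp Require Import mpoly ssrcomplements zify.
From Stdlib Require Import Classical ClassicalEpsilon.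
Import GRing.Theory.

Set Implicit Arguments. Unset Strict Implicit. Unset Printing Implicit Defensive.

Definition block_sizes (cnt : nat -> nat) N :=
  flatten [seq nseq (cnt i) i.+1 | i <- rev (iota 0 N)].

Lemma block_sizes_gt0 cnt N x : x \in block_sizes cnt N -> 0 < x.
Proof. by case/flattenP=> s /mapP[i _ ->]; rewrite mem_nseq => /andP[_ /eqP->]. Qed.

Lemma eq_block_sizes cnt cnt' N : {in gtn N, cnt =1 cnt'} ->
  block_sizes cnt N = block_sizes cnt' N.
Proof.
move=> eq_cnt; congr flatten; apply/eq_in_map => i.
by rewrite mem_rev mem_iota => /andP[_ ltiN]; rewrite eq_cnt.
Qed.

Lemma block_sizesS cnt N q :
  map S (block_sizes cnt N) ++ nseq q 1 =
  block_sizes (fun i => if i is i'.+1 then cnt i' else q) N.+1.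
Proof.
rewrite /block_sizes -[N.+1]add1n iotaD rev_cat map_cat flatten_cat /= cats0.
rewrite map_flatten -map_comp addn1 (iotaDl 1 0 N) -map_rev -map_comp.
by congr (flatten _ ++ _); apply: eq_map => i /=; rewrite map_nseq.
Qed.

Lemma sumn_block_sizes_subn cnt N i :
  sumn [seq x - i | x <- block_sizes cnt N] = \sum_(j < N) cnt j * (j.+1 - i).
Proof.
rewrite sumnE big_map big_flatten /= big_map big_rev.
rewrite -[N in iota 0 N]subn0 -/(index_iota 0 N) big_mkord.
by apply: eq_bigr => j _; rewrite big_nseq iter_addn addn0 mulnC.
Qed.

Lemma sumn_block_sizes_subn_eq0 cnt N i : N <= i ->
  sumn [seq x - i | x <- block_sizes cnt N] = 0.
Proof.
move=> le_Ni; rewrite sumn_block_sizes_subn big1 // => j _; apply/eqP.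
by rewrite muln_eq0 subn_eq0 (leq_trans (ltn_ord j) le_Ni) orbT.
Qed.

Lemma block_sizes_second_difference cnt N i : i < N ->
  let D i := sumn [seq x - i | x <- block_sizes cnt N] in
  D i + D i.+2 = 2 * D i.+1 + cnt i.
Proof.
move=> ltiN /=; rewrite !sumn_block_sizes_subn -big_split big_distrr /=.
rewrite [cnt i](_ : _ = \sum_(j < N) cnt j * (j == i :> nat)); last first.
  rewrite (bigD1 (Ordinal ltiN)) //= eqxx muln1 big1 ?addn0 // => j.
  by rewrite -val_eqE /= => /negbTE->; rewrite muln0.
rewrite -big_split /=; apply: eq_bigr => j _; rewrite -!mulnDr mulnCA -mulnDr.
by congr (_ * _); case: (ltngtP j i) => [||->]; lia.
Qed.

Local Open Scope ring_scope.

Section QuotientDimension.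
Variables (k : fieldType) (V : lmodType k).
Implicit Types (K : V -> Prop) (g : V).

Definition subspace K := K 0 /\ (forall a x y, K x -> K y -> K (a *: x + y)).

Definition free_mod K m (v : 'I_m -> V) :=
  forall c : 'I_m -> k, K (\sum_(j < m) c j *: v j) -> forall j, c j = 0.

Definition dim_mod_le K m := forall p (v : 'I_p -> V), free_mod K v -> (p <= m)%N.

Definition dim_mod_is K m := (exists v : 'I_m -> V, free_mod K v) /\ dim_mod_le K m.

Definition free_modn K p (y : nat -> V) :=
  forall c : nat -> k, K (\sum_(j < p) c j *: y j) -> forall j, (j < p)%N -> c j = 0.

Definition in_span_mod K p (y : nat -> V) g :=
  exists c : nat -> k, K (g - \sum_(j < p) c j *: y j).

Section Subspace.
Variables (K : V -> Prop) (HK : subspace K).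

Lemma subspace0 : K 0. Proof. by case: HK. Qed.

Lemma subspaceZ a x : K x -> K (a *: x).
Proof. by move=> Kx; rewrite -[_ *: _]addr0; apply: (HK.2 a x 0 Kx subspace0). Qed.

Lemma subspaceD x y : K x -> K y -> K (x + y).
Proof. by move=> Kx Ky; rewrite -[x]scale1r; apply: HK.2. Qed.

Lemma subspaceB x y : K x -> K y -> K (x - y).
Proof. by move=> Kx Ky; rewrite -scaleN1r; apply: subspaceD Kx (subspaceZ _ Ky). Qed.

Lemma subspace_sum (I : Type) (r : seq I) (P : pred I) (F : I -> V) :
  (forall i, P i -> K (F i)) -> K (\sum_(i <- r | P i) F i).
Proof.
move=> KF; elim/big_rec: _ => [|i x Pi Kx]; first exact: subspace0.
exact: subspaceD (KF i Pi) Kx.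
Qed.

End Subspace.

Lemma subspace_preim (f : {linear V -> V}) K :
  subspace K -> subspace (fun x => K (f x)).
Proof.
move=> HK; split=> [|a x y Kx Ky]; first by rewrite linear0; apply: subspace0.
by rewrite linearP; apply: HK.2.
Qed.

Lemma dim_mod_is_ext K K' m :
  (forall g, K g <-> K' g) -> dim_mod_is K m -> dim_mod_is K' m.
Proof.
move=> KK' [[v fv] dimK]; split=> [|p w fw].
  by exists v => c /KK' /fv.
by apply: dimK => c /KK' /fw.
Qed.

Lemma dim_mod_is_unique K m m' : dim_mod_is K m -> dim_mod_is K m' -> m = m'.
Proof.
move=> [[v fv] le_m] [[v' fv'] le_m'].
by apply/eqP; rewrite eqn_leq (le_m' _ v fv) (le_m _ v' fv').
Qed.

Lemma free_mod_leq_card K (T : finType) (B : T -> V) m (v : 'I_m -> V) :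
  subspace K -> (forall g, exists a : T -> k, K (g - \sum_x a x *: B x)) ->
  free_mod K v -> (m <= #|T|)%N.
Proof.
move=> HK span fv; rewrite leqNgt; apply/negP => lt_Tm.
have [a Ka] := fin_all_exists (fun i : 'I_m => span (v i)).
pose M : 'M[k]_(m, #|T|) := \matrix_(i, j) a i (enum_val j).
have : kermx M != 0.
  by rewrite -mxrank_eq0 mxrank_ker subn_eq0 -ltnNge (leq_ltn_trans (rank_leq_col M)).
case/rowV0Pn => z; rewrite sub_kermx => /eqP zM /rV0Pn[i /eqP[]]; apply: fv.
(* [z] is a nontrivial relation between the coordinates of the [v i] on [B]. *)
have -> : \sum_(i < m) z 0 i *: v i =
          \sum_(i < m) z 0 i *: (v i - \sum_x a i x *: B x).
  under [RHS]eq_bigr do rewrite scalerBr scaler_sumr.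
  rewrite sumrB exchange_big /= [X in _ - X]big1 ?subr0 // => x _.
  under eq_bigr do rewrite scalerA.
  rewrite -scaler_suml; have -> : \sum_i z 0 i * a i x = (z *m M) 0 (enum_rank x).
    by rewrite mxE; apply: eq_bigr => j _; rewrite mxE enum_rankK.
  by rewrite zM mxE scale0r.
by apply: subspace_sum => // j _; apply: subspaceZ.
Qed.

Lemma free_modn_leq K m p y : dim_mod_le K m -> free_modn K p y -> (p <= m)%N.
Proof.
move=> dimK fy; apply: (dimK p (fun i : 'I_p => y i)) => c Kc i.
pose c' j : k := if insub j is Some i then c i else 0.
have c'E (j : 'I_p) : c' j = c j by rewrite /c' valK.
by rewrite -c'E; apply: fy (ltn_ord i); under eq_bigr do rewrite c'E.
Qed.

Lemma dim_mod_is_basis K (T : finType) (B : T -> V) :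
  subspace K -> (forall g, exists a : T -> k, K (g - \sum_x a x *: B x)) ->
  (forall a : T -> k, K (\sum_x a x *: B x) -> forall x, a x = 0) ->
  dim_mod_is K #|T|.
Proof.
move=> HK span free; split=> [|p v]; last exact: free_mod_leq_card HK span.
exists (fun i => B (enum_val i)) => c Kc i; rewrite -(enum_valK i).
apply: (free (fun x => c (enum_rank x))); move: Kc.
rewrite (reindex enum_rank) /=; last exact/onW_bij/enum_rank_bij.
by under eq_bigr do rewrite enum_rankK.
Qed.

Section Extension.
Variables (K K1 : V -> Prop) (m : nat).
Hypotheses (HK : subspace K) (dimK : dim_mod_le K m).

Lemma free_modn_rcons p y g : free_modn K p y -> ~ in_span_mod K p y g ->
  free_modn K p.+1 (fun j => if j == p then g else y j).
Proof.
move=> fy yg c; rewrite big_ord_recr /= eqxx.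
under eq_bigr => j _ do rewrite (ltn_eqF (ltn_ord j)).
move=> Kc; have cp0 : c p = 0.
  apply/eqP; apply: contra_notT yg => cp_neq0.
  exists (fun j => - (c j / c p)).
  under eq_bigr do rewrite scaleNr mulrC -scalerA.
  rewrite sumrN opprK -scaler_sumr -{1}(scalerK cp_neq0 g) -scalerDr addrC.
  exact: (subspaceZ HK).
move=> j; rewrite ltnS leq_eqVlt => /predU1P[->//|ltjp].
by apply: fy ltjp; rewrite cp0 scale0r addr0 in Kc.
Qed.

Lemma free_modn_extend p y : (forall j, (j < p)%N -> K1 (y j)) -> free_modn K p y ->
  exists q (w : nat -> V),
    [/\ forall j, (j < p)%N -> w j = y j,
        forall j, (p <= j < p + q)%N -> K1 (w j),
        free_modn K (p + q) w &
        forall g, K1 g -> in_span_mod K (p + q) w g].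
Proof.
have [f] := ubnP (m - p); elim: f => // f IH in p y *; rewrite ltnS => le_mp Ky fy.
have [spans|] := classic (forall g, K1 g -> in_span_mod K p y g).
  by exists 0%N, y; rewrite addn0; split=> // j; rewrite ltnNge andbN.
move=> /not_all_ex_not[g not_span_g].
have [K1g yg] := imply_to_and _ _ not_span_g.
have fyg := free_modn_rcons fy yg.
have lt_pm := free_modn_leq dimK fyg.
have [|j lt_jp|q [w [wy Kw fw sw]]] := IH p.+1 _ _ _ fyg.
- by rewrite subnS prednK // subn_gt0.
- move: lt_jp; rewrite ltnS leq_eqVlt => /predU1P[->|lt_jp]; first by rewrite eqxx.
  by rewrite (ltn_eqF lt_jp); apply: Ky.
exists q.+1, w; rewrite -addSnnS; split=> [j lt_jp|j /andP[le_pj lt_jpq]|//|//].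
  by rewrite wy ?(ltn_eqF lt_jp) // ltnW.
have [->|ne_jp] := eqVneq j p; first by rewrite wy ?eqxx.
by apply: Kw; rewrite lt_jpq ltn_neqAle eq_sym ne_jp le_pj.
Qed.

End Extension.

End QuotientDimension.

Section JordanBasis.
Variables (k : fieldType) (V : lmodType k) (L : {linear V -> V}).
Implicit Types (K : V -> Prop) (P : seq nat) (c : nat -> nat -> k).

Definition Lpow t : V -> V := iter t L.

Lemma Lpow_is_linear t : linear (Lpow t).
Proof. by elim: t => [//|t IH] a x y; rewrite /Lpow /= -!/(Lpow t _) IH linearP. Qed.
HB.instance Definition _ t :=
  GRing.isLinear.Build k V V *:%R (Lpow t) (Lpow_is_linear t).

Definition preimL K x := K (L x).

Definition stable K := forall x, K x -> K (L x).

Lemma stable_preimL K : stable K -> stable (preimL K).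
Proof. by move=> sK x; apply: sK. Qed.

Lemma dim_mod_le_preimL K m : dim_mod_le K m -> dim_mod_le (preimL K) m.
Proof.
move=> dimK p v fv; apply: (dimK p (L \o v)) => c Kc; apply: fv.
by rewrite /preimL linear_sum; under eq_bigr do rewrite linearZ.
Qed.

Definition strings_comb P c (v : nat -> V) :=
  \sum_(j < size P) \sum_(t < nth 0%N P j) c j t *: Lpow t (v j).

Definition jordan_basis_mod K P (v : nat -> V) := [/\
  forall j, (j < size P)%N -> K (Lpow (nth 0%N P j) (v j)),
  forall g, exists c, K (g - strings_comb P c v) &
  forall c, K (strings_comb P c v) ->
    forall j t, (j < size P)%N -> (t < nth 0%N P j)%N -> c j t = 0].

Lemma jordan_basis_mod_dim K P v : subspace K -> jordan_basis_mod K P v ->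
  dim_mod_is K (sumn P).
Proof.
move=> HK [_ span free].
pose T := {j : 'I_(size P) & 'I_(nth 0%N P j)}.
have cardT : #|{: T}| = sumn P.
  rewrite card_tagged sumnE big_map big_enum /= sumnE (big_nth 0%N) big_mkord.
  by apply: eq_bigr => j _; rewrite card_ord.
have combT c : strings_comb P c v =
    \sum_(x : T) c (tag x) (tagged x) *: Lpow (tagged x) (v (tag x)).
  exact: (@sig_big_dep _ 0 +%R 'I_(size P) (fun j => 'I_(nth 0%N P j)) xpredT
            (fun _ => xpredT) (fun j t => c j t *: Lpow t (v j))).
rewrite -cardT.
apply: (dim_mod_is_basis (B := fun x : T => Lpow (tagged x) (v (tag x))) HK) => [g|a Ka x].
  by have [c Kc] := span g; exists (fun x : T => c (tag x) (tagged x)); rewrite combT in Kc.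
pose c (j t : nat) := oapp (fun j' : 'I_(size P) => oapp (fun t' : 'I_(nth 0%N P j') =>
  a (Tagged (fun i : 'I_(size P) => 'I_(nth 0%N P i)) t')) 0 (insub t)) 0 (insub j).
have cE (y : T) : c (tag y) (tagged y) = a y.
  by case: y => j t; rewrite /c /= valK /= valK.
case: x => j t; rewrite -cE; apply: (free c) => //=.
by rewrite combT; under eq_bigr do rewrite cE.
Qed.

Section Preimage.
Variables (K : V -> Prop) (P : seq nat) (v : nat -> V).
Hypotheses (HK : subspace K) (sK : stable K) (Jv : jordan_basis_mod K P v).

Lemma strings_comb_pred c : strings_comb [seq x.-1 | x <- P] c v =
  \sum_(j < size P) \sum_(t < (nth 0%N P j).-1) c j t *: Lpow t (v j).
Proof.
by rewrite /strings_comb size_map; apply: eq_bigr => j _; rewrite (nth_map 0%N).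
Qed.

Lemma jordan_basis_mod_preimL :
  jordan_basis_mod (preimL K) [seq x.-1 | x <- P] v.
Proof.
have HK' : subspace (preimL K) := subspace_preim L HK.
case: Jv => top span free; split=> [j|g|c].
- rewrite size_map => ltjP; rewrite (nth_map 0%N) // /preimL.
  by case: (nth 0%N P j) (top j ltjP) => [/sK|b].
- have [c Kc] := span g; exists c; rewrite strings_comb_pred.
  rewrite -[g](subrK (strings_comb P c v)) -addrA; apply: (subspaceD HK').
    exact: sK.
  rewrite /strings_comb -sumrB; apply: (subspace_sum HK') => j _.
  have := top j (ltn_ord j).
  case: (nth 0%N P j) => [|b] Kb; first by rewrite !big_ord0 subrr; apply: subspace0.
  rewrite big_ord_recr /= addrAC subrr add0r; apply: (subspaceZ HK').
  exact: Kb.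
rewrite strings_comb_pred /preimL linear_sum => Kc j t.
rewrite size_map => ltjP; rewrite (nth_map 0%N) // => ltt.
pose c' j t := if t is t'.+1 then c j t' else 0.
have /free /(_ j t.+1 ltjP) : K (strings_comb P c' v).
  congr K: Kc; apply: eq_bigr => i _; rewrite linear_sum.
  case: (nth 0%N P i) => [|b] /=; first by rewrite !big_ord0.
  rewrite big_ord_recl /= scale0r add0r; apply: eq_bigr => s _.
  by rewrite linearZ.
by apply; rewrite -ltn_predRL.
Qed.

End Preimage.

Lemma jordan_basis_mod_Lpow K P v i : subspace K -> stable K ->
  jordan_basis_mod K P v ->
  jordan_basis_mod (fun g => K (Lpow i g)) [seq x - i | x <- P]%N v.
Proof.
elim: i K P => [|i IH] K P HK sK Jv; first by rewrite (eq_map (@subn0)) map_id.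
have -> : [seq x - i.+1 | x <- P]%N = [seq y - i | y <- [seq x.-1 | x <- P]]%N.
  by rewrite -map_comp; apply: eq_map => x /=; rewrite -subn1 -subnDA add1n.
exact: IH (subspace_preim L HK) (stable_preimL sK) (jordan_basis_mod_preimL HK sK Jv).
Qed.

Lemma dim_mod_Lpow K P v i : subspace K -> stable K -> jordan_basis_mod K P v ->
  dim_mod_is (fun g => K (Lpow i g)) (sumn [seq x - i | x <- P]%N).
Proof.
move=> HK sK Jv; apply: (jordan_basis_mod_dim (subspace_preim (Lpow i) HK)).
exact: jordan_basis_mod_Lpow HK sK Jv.
Qed.

Section Lift.
Variables (K : V -> Prop) (P : seq nat) (u : nat -> V) (q : nat) (w : nat -> V).
Hypotheses (HK : subspace K) (sK : stable K) (Ju : jordan_basis_mod (preimL K) P u).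
Local Notation p := (size P).
Hypotheses (wu : forall j, (j < p)%N -> w j = Lpow (nth 0%N P j) (u j))
  (Kw : forall j, (p <= j < p + q)%N -> preimL K (w j))
  (fw : free_modn K (p + q) w)
  (sw : forall g, preimL K g -> in_span_mod K (p + q) w g).

Local Notation P' := (map S P ++ nseq q 1%N).
Let v j := if (j < p)%N then u j else w j.

Lemma jordan_tops_free : (forall j, (j < p)%N -> 0 < nth 0%N P j)%N ->
  free_modn K p (fun j => Lpow (nth 0%N P j) (u j)).
Proof.
case: Ju => _ _ free P_gt0 a Ka j ltjp.
pose c j t := if t == (nth 0%N P j).-1 then a j else 0.
have Kc : preimL K (strings_comb P c u).
  rewrite /preimL linear_sum; congr K: Ka; apply: eq_bigr => i _.
  rewrite -(prednK (P_gt0 i (ltn_ord i))) big_ord_recr big1 /= => [|t _].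
    by rewrite add0r linearZ /c eqxx.
  by rewrite /c (ltn_eqF (ltn_ord t)) scale0r.
have := free c Kc j (nth 0%N P j).-1 ltjp.
by rewrite /c eqxx; apply; rewrite prednK ?P_gt0.
Qed.

Lemma size_lift : size P' = (p + q)%N.
Proof. by rewrite size_cat size_map size_nseq. Qed.

Lemma nth_lift j : (j < p + q)%N ->
  nth 0%N P' j = if (j < p)%N then (nth 0%N P j).+1 else 1%N.
Proof.
move=> ltjpq; rewrite nth_cat size_map; case: ifP => [ltjp|/negbT].
  by rewrite (nth_map 0%N).
by rewrite -leqNgt => lepj; rewrite nth_nseq ltn_subLR ?ltjpq.
Qed.

Lemma strings_comb_lift c : strings_comb P' c v =
  strings_comb P c u + \sum_(j < p + q) c j (if (j < p)%N then nth 0%N P j else 0%N) *: w j.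
Proof.
rewrite /strings_comb size_lift !big_split_ord /= addrA -big_split /=; congr (_ + _).
  apply: eq_bigr => j _; rewrite nth_lift ?ltn_addr // /v !ltn_ord big_ord_recr /=.
  by rewrite wu.
apply: eq_bigr => j _; rewrite nth_lift ?ltn_add2l // ltnNge leq_addr /= big_ord1.
by rewrite /v ltnNge leq_addr.
Qed.

Lemma jordan_basis_lift : jordan_basis_mod K P' v.
Proof.
have HK' : subspace (preimL K) := subspace_preim L HK.
case: Ju => top span free; split=> [j|g|c].
- rewrite size_lift => ltjpq; rewrite nth_lift // /v; case: ifP => [ltjp|/negbT].
    exact: top.
  by rewrite -leqNgt => lepj; apply: Kw; rewrite lepj.
- have [c Kc] := span g; have [e Ke] := sw Kc.
  exists (fun j t => if (j < p) && (t < nth 0 P j) then c j t else e j)%N.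
  rewrite strings_comb_lift opprD addrA; congr (K (_ - _ - _)): Ke.
    by apply: eq_bigr => j _; rewrite ltn_ord; apply: eq_bigr => t _; rewrite ltn_ord.
  by apply: eq_bigr => j _; case: ltnP; rewrite ?ltnn.
rewrite strings_comb_lift => Kc.
set top_comb := \sum_(j < p + q) _ in Kc.
have K'top : preimL K top_comb.
  apply: (subspace_sum HK') => j _; apply: (subspaceZ HK').
  case: (ltnP j p) => [ltjp|lepj]; first by rewrite wu //; apply: top.
  by apply: Kw; rewrite lepj ltn_ord.
have c0 : forall j t, (j < p)%N -> (t < nth 0%N P j)%N -> c j t = 0.
  apply: free; rewrite -[strings_comb _ _ _](addrK top_comb).
  have K'sum : preimL K (strings_comb P c u + top_comb) by apply: sK.
  by apply: (subspaceB HK').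
have comb0 : strings_comb P c u = 0.
  by apply: big1 => j _; apply: big1 => t _; rewrite c0 ?scale0r.
rewrite comb0 add0r in Kc.
have top0 := @fw (fun j => c j (if (j < p)%N then nth 0%N P j else 0%N)) Kc.
move=> j t; rewrite size_lift => ltjpq; rewrite nth_lift //.
have := top0 j ltjpq; case: ltnP => [ltjp|_] /= top0j; rewrite ltnS.
  by rewrite leq_eqVlt => /predU1P[->//|]; apply: c0.
by rewrite leqn0 => /eqP->.
Qed.

End Lift.

Lemma exists_jordan_basis_mod N K m : subspace K -> stable K -> dim_mod_le K m ->
  (forall x, K (Lpow N x)) ->
  exists P v (cnt : nat -> nat), jordan_basis_mod K P v /\ P = block_sizes cnt N.
Proof.
elim: N K => [|N IH] K HK sK dimK nilK.
  exists [::], (fun _ => 0), (fun _ => 0%N); split=> //; split=> // g.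
  by exists (fun _ _ => 0); rewrite /strings_comb big_ord0 subr0; apply: nilK.
have [P [u [cnt [Ju def_P]]]] := IH _ (subspace_preim L HK) (stable_preimL sK)
  (dim_mod_le_preimL dimK) nilK.
have P_gt0 j : (j < size P)%N -> (0 < nth 0%N P j)%N.
  by move=> ltjP; apply: (@block_sizes_gt0 cnt N); rewrite -def_P mem_nth.
have [top _ _] := Ju.
have [q [w [wu Kw fw sw]]] :=
  free_modn_extend (K1 := preimL K) HK dimK top (jordan_tops_free Ju P_gt0).
exists (map S P ++ nseq q 1%N), (fun j => if (j < size P)%N then u j else w j).
exists (fun i => if i is i'.+1 then cnt i' else q).
by split; [apply: jordan_basis_lift | rewrite def_P block_sizesS].
Qed.

End JordanBasis.

Section Contraction.
Variables (k : fieldType) (n : nat).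
Local Notation S := {mpoly k[n]}.
Implicit Types (g h G : S).

Lemma contract_msize D g G : (msize g <= D)%N ->
  contract g G = \sum_(m : 'X_{1..n < D}) g@_m *: G^`M[m].
Proof.
move=> le_gD; rewrite /contract (big_mksub 'X_{1..n < D}) //=; first last.
- by move=> x /msize_mdeg_lt /leq_trans; apply.
- exact: msupp_uniq.
by rewrite big_rmcond //= => m /memN_msupp_eq0 ->; rewrite scale0r.
Qed.

Lemma contractPl a g h G :
  contract (a *: g + h) G = a *: contract g G + contract h G.
Proof.
pose D := maxn (msize (a *: g + h)) (maxn (msize g) (msize h)).
have le_sD : (msize (a *: g + h) <= D)%N by rewrite leq_maxl.
have le_gD : (msize g <= D)%N by rewrite (leq_trans (leq_maxl _ (msize h))) ?leq_maxr.
have le_hD : (msize h <= D)%N by rewrite (leq_trans (leq_maxr (msize g) _)) ?leq_maxr.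
rewrite (contract_msize _ le_sD) (contract_msize _ le_gD) (contract_msize _ le_hD).
rewrite scaler_sumr -big_split /=; apply: eq_bigr => m _.
by rewrite mcoeffD mcoeffZ scalerDl scalerA.
Qed.

Lemma contract0l G : contract 0 G = 0.
Proof. by rewrite /contract msupp0 big_nil. Qed.

Lemma contract0r g : contract g 0 = 0.
Proof. by rewrite /contract big1 // => m _; rewrite linear0 scaler0. Qed.

Lemma contractXl m G : contract 'X_[m] G = G^`M[m].
Proof. by rewrite /contract msuppX big_seq1 mcoeffX eqxx scale1r. Qed.

Lemma contract_suml (I : Type) (r : seq I) (P : pred I) (F : I -> S) G :
  contract (\sum_(i <- r | P i) F i) G = \sum_(i <- r | P i) contract (F i) G.
Proof.
have contractDl x y : contract (x + y) G = contract x G + contract y G.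
  by have := contractPl 1 x y G; rewrite !scale1r.
exact: (big_morph (fun x => contract x G) contractDl (contract0l G)).
Qed.

Lemma contractMl g h G : contract (g * h) G = contract g (contract h G).
Proof.
pose D := maxn (msize g) (msize h).
have [le_gD le_hD] : (msize g <= D)%N /\ (msize h <= D)%N by rewrite leq_maxl leq_maxr.
rewrite (mpolywME le_gD le_hD) contract_suml !(contract_msize _ le_gD).
rewrite -(pair_bigA _ (fun m1 m2 : 'X_{1..n < D} =>
  contract ((g@_m1 * h@_m2) *: 'X_[m1 + m2]) G)) /=.
apply: eq_bigr => m1 _; rewrite (contract_msize _ le_hD) linear_sum scaler_sumr.
apply: eq_bigr => m2 _; rewrite -[_ *: 'X_[_]]addr0 contractPl contract0l addr0.
by rewrite contractXl linearZ /= scalerA addmC mderivmDm.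
Qed.

Lemma mderivm_eq0 m G : {in msupp G, forall m', mdeg m' < mdeg m}%N ->
  G^`M[m] = 0.
Proof.
move=> lt_mdeg; rewrite mderivmE big_seq big1 // => m' /lt_mdeg.
rewrite !mdegE ltnNge => /negP not_le.
have [i lt_i] : exists i : 'I_n, (m' i < m i)%N.
  apply: NNPP => no_i; apply: not_le; apply: leq_sum => i _.
  by rewrite leqNgt; apply/negP => lt_i; apply: no_i; exists i.
by rewrite (bigD1 i) //= ffact_small // mul0n mulr0 scale0r.
Qed.

Lemma contract_eq0 g G :
  (forall m m', m \in msupp g -> m' \in msupp G -> mdeg m' < mdeg m)%N ->
  contract g G = 0.
Proof.
move=> lt_mdeg; rewrite /contract big_seq big1 // => m supp_m.
by rewrite mderivm_eq0 ?scaler0 // => m'; apply: lt_mdeg.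
Qed.

End Contraction.

Section Annihilator.
Variables (k : fieldType) (n : nat) (F l : {mpoly k[n]}).
Local Notation S := {mpoly k[n]}.
Local Notation mul_l := (l \*o idfun).

(* [qdim_is] and [indep_mod] are [dim_mod_is] and [free_mod] at [V := S]. *)
Lemma qdim_eq (I : S -> Prop) m : qdim_is I m -> qdim I = m.
Proof.
by move=> dimI; apply: dim_mod_is_unique (epsilon_spec _ _ (ex_intro _ m dimI)) dimI.
Qed.

Lemma annih_subspace : subspace (annih F).
Proof.
split=> [|a x y Fx Fy]; first exact: contract0l.
by rewrite /annih contractPl Fx Fy scaler0 addr0.
Qed.

Lemma annih_contract h g : annih (contract h F) g = annih F (h * g).
Proof. by rewrite /annih -contractMl mulrC. Qed.

Lemma annih_mul_stable : stable mul_l (annih F).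
Proof. by move=> g Fg; rewrite /annih /= contractMl Fg contract0r. Qed.

Lemma Lpow_mul t g : Lpow mul_l t g = l ^+ t * g.
Proof. by elim: t => [|t IH]; rewrite ?mul1r // exprS -mulrA -IH. Qed.

Lemma annih_dim_mod_le : dim_mod_le (annih F) #|{: 'X_{1..n < msize F}}|.
Proof.
move=> p v fv.
apply: (free_mod_leq_card (B := fun m : 'X_{1..n < msize F} => 'X_[m]) annih_subspace _ fv)
  => g.
exists (fun m : 'X_{1..n < msize F} => g@_m); apply: contract_eq0 => m m' supp_m supp_m'.
apply: leq_trans (msize_mdeg_lt supp_m') _; rewrite leqNgt; apply/negP => lt_mF.
move: supp_m; rewrite mcoeff_msupp mcoeffB (mcoeff_mpoly (fun m => g@_m)) //.
by rewrite subrr eqxx.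
Qed.

Lemma annih_Lpow_homog d : F \is d.-homog -> l \is 1.-homog ->
  forall g, annih F (Lpow mul_l d.+1 g).
Proof.
move=> homF homl g; rewrite Lpow_mul /annih mulrC contractMl.
suff -> : contract (l ^+ d.+1) F = 0 by rewrite contract0r.
apply: contract_eq0 => m m' supp_m supp_m'.
by rewrite (dhomog_mf (dhomogMn d.+1 homl) supp_m) (dhomog_mf homF supp_m') mul1n.
Qed.

Lemma strings_comb_mul P c (v : nat -> S) : strings_comb mul_l P c v =
  \sum_(j < size P) \sum_(t < nth 0%N P j) c j t *: (l ^+ t * v j).
Proof. by apply: eq_bigr => j _; apply: eq_bigr => t _; rewrite Lpow_mul. Qed.

Lemma jordan_type_of_basis P (v : nat -> S) :
  jordan_basis_mod mul_l (annih F) P v -> jordan_type_is l F P.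
Proof.
case=> top span free; exists (fun j : 'I_(size P) => v j); split.
- by move=> j; rewrite -Lpow_mul; apply: top.
- by move=> g; have [c] := span g; rewrite strings_comb_mul; exists (fun j t => c j t).
move=> c Fc j t ltt.
pose c' (j t : nat) := oapp (fun j' : 'I_(size P) => c j' t) 0 (insub j).
have c'E (i : 'I_(size P)) s : c' i s = c i s by rewrite /c' valK.
rewrite -c'E; apply: free => //; rewrite strings_comb_mul.
by under eq_bigr do under eq_bigr do rewrite c'E.
Qed.

End Annihilator.

Theorem proposition3p14 (k : fieldType) (n : nat) (F l : {mpoly k[n]}) (d : nat) :
  [pchar k] =i pred0 ->
  (2 <= n)%N ->
  (2 <= d)%N ->
  F != 0 -> F \is d.-homog ->
  l \is 1.-homog ->
  (forall i, (i <= d)%N -> 0 <= d2dim l F d i) /\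
  jordan_type_is l F
    (flatten [seq nseq `|d2dim l F d i|%N i.+1 | i <- rev (iota 0 d.+1)]).
Proof.
move=> _ _ _ _ homF homl.
have HF := annih_subspace F; have sF := @annih_mul_stable _ _ F l.
have [P [v [cnt [Jv def_P]]]] := exists_jordan_basis_mod HF sF
  (annih_dim_mod_le (F := F)) (annih_Lpow_homog homF homl).
have dimAE i : dimA l F d i = sumn [seq x - i | x <- P]%N.
  rewrite /dimA; case: leqP => [_|lt_di]; last by rewrite def_P sumn_block_sizes_subn_eq0.
  apply/qdim_eq/(dim_mod_is_ext _ (dim_mod_Lpow i HF sF Jv)) => g.
  by rewrite Lpow_mul annih_contract.
have d2E i : (i <= d)%N -> d2dim l F d i = (cnt i)%:Z.
  move=> le_id; rewrite /d2dim !dimAE def_P.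
  by have /= := block_sizes_second_difference cnt (le_id : i < d.+1)%N; lia.
split=> [i le_id|]; first by rewrite d2E.
rewrite -/(block_sizes _ d.+1) (@eq_block_sizes _ cnt) => [|i le_id]; last by rewrite d2E.
by rewrite -def_P; apply: jordan_type_of_basis Jv.
Qed.
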